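(* Let $\mathcal{A}_i\subset\mathbb{R}^{n_i}$, $i\in\mathbb{N}$, be nonempty closed sets and assume that $\mathcal{A}:=\{x\in X: x_i\in\mathcal{A}_i \text{ for all } i\in\mathbb{N}\}$ is nonempty. Then for every $x\in X$ there exists $y^*\in\mathcal{A}$ such that $|x|_{\mathcal{A}}=\sup_{i\in\mathbb{N}}|x_i|_{\mathcal{A}_i}=|x-y^*|_\infty$.
   Context: For each $i\in\mathbb{N}$ fix a positive integer $n_i$ and a norm $|\cdot|$ on $\mathbb{R}^{n_i}$. Let $X:=\{x=(x_i)_{i\in\mathbb{N}}: x_i\in\mathbb{R}^{n_i},\ \sup_i|x_i|<\infty\}$ with norm $|x|_\infty:=\sup_i|x_i|$. For $z\in\mathbb{R}^{n_i}$, $|z|_{\mathcal{A}_i}:=\inf_{y\in\mathcal{A}_i}|z-y|$, and for $x\in X$, $|x|_{\mathcal{A}}:=\inf_{y\in\mathcal{A}}|x-y|_\infty$. *)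

From HB Require Import structures.
From mathcomp Require Import all_boot all_order all_algebra.
From mathcomp Require Import all_classical all_reals all_analysis.
Set Implicit Arguments. Unset Strict Implicit. Unset Printing Implicit Defensive.
Import Order.TTheory GRing.Theory Num.Theory.
Import numFieldNormedType.Exports.
Local Open Scope classical_set_scope.
Local Open Scope ring_scope.

Definition is_norm (R : realType) (m : nat) (N : 'rV[R]_m -> R) : Prop :=
  [/\ (forall v, N v = 0 -> v = 0),
      (forall (a : R) v, N (a *: v) = `|a| * N v) &
      (forall u v, N (u + v) <= N u + N v)].

(* Elements of X: sequences (x_i) with x_i in R^(n i) and sup_i |x_i| < oo. *)
Definition inX (R : realType) (n : nat -> nat) (N : forall i, 'rV[R]_(n i) -> R)
  (x : forall i, 'rV[R]_(n i)) : Prop :=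
  exists M : R, forall i, N i (x i) <= M.

Definition supnorm (R : realType) (n : nat -> nat) (N : forall i, 'rV[R]_(n i) -> R)
  (x : forall i, 'rV[R]_(n i)) : R :=
  sup [set N i (x i) | i in [set: nat]].

Definition seqsub (R : realType) (n : nat -> nat) (x y : forall i, 'rV[R]_(n i)) :
  forall i, 'rV[R]_(n i) := fun i => x i - y i.

Definition dist_comp (R : realType) (m : nat) (N : 'rV[R]_m -> R)
  (Ai : set 'rV[R]_m) (z : 'rV[R]_m) : R :=
  inf [set N (z - y) | y in Ai].

Definition prodset (R : realType) (n : nat -> nat) (N : forall i, 'rV[R]_(n i) -> R)
  (A : forall i, set 'rV[R]_(n i)) : set (forall i, 'rV[R]_(n i)) :=
  [set y | inX N y /\ forall i, A i (y i)].

Definition dist_prod (R : realType) (n : nat -> nat) (N : forall i, 'rV[R]_(n i) -> R)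
  (A : forall i, set 'rV[R]_(n i)) (x : forall i, 'rV[R]_(n i)) : R :=
  inf [set supnorm N (seqsub x y) | y in prodset N A].

(* Every norm on R^m is equivalent to the max norm, so the sublevel sets of
   y |-> |x_i - y| meet the closed set A_i in a compact set and the distance
   |x_i|_{A_i} is attained at some y_i in A_i. Comparing with any a in A gives
   |x_i - y_i| <= |x_i - a_i|, so y = (y_i) is bounded and lies in A, with
   |x - y|_oo = sup_i |x_i|_{A_i}. Since |x_i|_{A_i} <= |x_i - y'_i| for every
   y' in A, this supremum is also a lower bound of |x - y'|_oo, so the
   infimum |x|_A is attained at y. *)
From HB Require Import structures.
From mathcomp Require Import all_boot all_order all_algebra.
From mathcomp Require Import all_classical all_reals all_analysis.
From mathcomp Require Import lra.
Import Order.TTheory GRing.Theory Num.Theory.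
Import numFieldNormedType.Exports.
Local Open Scope classical_set_scope.
Local Open Scope ring_scope.

Lemma norm_le_bounded_set (R : realFieldType) (V : normedModType R) (A : set V) (M : R) :
  (forall v, A v -> `|v| <= M) -> bounded_set A.
Proof.
move=> AM; rewrite /bounded_set /bounded_near /globally /=.
near=> M' => v /AM /le_trans; apply; near: M'.
by apply: nbhs_pinfty_ge; rewrite num_real.
Unshelve. all: by end_near. Qed.

Lemma inf_image_argmin (R : realType) (T : Type) (P : set T) (f : T -> R) (t0 : T) :
  P t0 -> (forall t, P t -> f t0 <= f t) -> inf [set f t | t in P] = f t0.
Proof.
move=> Pt0 t0_min; apply/le_anti/andP; split.
  by apply: ge_inf; [exists (f t0) => _ [t Pt <-]; exact: t0_min | exists t0].
by apply: lb_le_inf; [exists (f t0), t0 | move=> _ [t Pt <-]; exact: t0_min].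
Qed.

Section IsNorm.
Context {R : realType} {m : nat} {N : 'rV[R]_m -> R}.
Hypothesis N_norm : is_norm N.

Lemma isnorm_eq0 v : N v = 0 -> v = 0. Proof. by case: N_norm => + _ _; apply. Qed.
Lemma isnormZ a v : N (a *: v) = `|a| * N v. Proof. by case: N_norm => _ + _; apply. Qed.
Lemma ler_isnormD u v : N (u + v) <= N u + N v. Proof. by case: N_norm => _ _; apply. Qed.

Lemma isnorm0 : N 0 = 0.
Proof. by rewrite -(scale0r (0 : 'rV[R]_m)) isnormZ normr0 mul0r. Qed.

Lemma isnormN v : N (- v) = N v.
Proof. by rewrite -scaleN1r isnormZ normrN1 mul1r. Qed.

Lemma ler_isnormB u v : N (u - v) <= N u + N v.
Proof. by rewrite -[N v]isnormN ler_isnormD. Qed.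

Lemma isnorm_ge0 v : 0 <= N v.
Proof.
by rewrite -(pmulrn_lge0 _ (ltn0Sn 1)) mulr2n -isnorm0 -{1}(subrr v) ler_isnormB.
Qed.

Lemma isnorm_gt0 v : v != 0 -> 0 < N v.
Proof.
by move=> v0; rewrite lt_def isnorm_ge0 andbT; apply: contra v0 => /eqP/isnorm_eq0->.
Qed.

Lemma ler_isnorm_dist u v : `|N u - N v| <= N (u - v).
Proof.
have Nv_le : N v <= N u + N (u - v) by rewrite -{1}(subKr u v) ler_isnormB.
have Nu_le : N u <= N (u - v) + N v by rewrite -{1}(subrK v u) ler_isnormD.
rewrite ler_norml; apply/andP; split; lra.
Qed.

Lemma isnorm_le_mx_norm : exists2 C, 0 < C & forall v, N v <= C * `|v|.
Proof.
exists (1 + \sum_(j < m) N 'e_j).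
  by rewrite ltr_pwDl // sumr_ge0 // => j _; exact: isnorm_ge0.
move=> v; have N_sum : N v <= \sum_(j < m) `|v 0 j| * N 'e_j.
  rewrite {1}(row_sum_delta v).
  elim/big_rec2: _ => [|j y s _ IH]; first by rewrite isnorm0.
  by apply: le_trans (ler_isnormD _ _) _; rewrite isnormZ lerD.
apply: (le_trans N_sum); apply: (@le_trans _ _ (`|v| * \sum_(j < m) N 'e_j)).
  rewrite mulr_sumr; apply: ler_sum => j _; rewrite ler_wpM2r ?isnorm_ge0 //.
  by rewrite [leRHS]/Num.Def.normr /= mx_normrE; apply/bigmax_geP; right; exists (0, j).
by rewrite mulrC ler_wpM2r // lerDr.
Qed.

Lemma isnorm_continuous : continuous N.
Proof.
have [C C_gt0 NC] := isnorm_le_mx_norm.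
move=> x; apply/(@cvgrPdist_le _ _ _ _ (nbhs_filter x)) => e e_gt0.
apply/(@nbhs_normP R (matrix R 1 m)); exists (e / C) => /=; first by rewrite divr_gt0.
move=> y /= xy_lt; apply: le_trans (ler_isnorm_dist _ _) _.
by apply: le_trans (NC _) _; rewrite -ler_pdivlMl // mulrC ltW.
Qed.

Lemma isnorm_ge_mx_norm : exists2 c, 0 < c & forall v, c * `|v| <= N v.
Proof.
pose S := [set v : 'rV[R]_m | `|v| = 1].
have S_normalize v : v != 0 -> S (`|v|^-1 *: v).
  by move=> v0; rewrite /S /= normrZ normfV normr_id mulVf // normr_eq0.
have [S0|S_empty] := pselect (S !=set0); last first. (* only when m = 0 *)
  exists 1 => // v; have [->|v0] := eqVneq v 0; first by rewrite normr0 mulr0 isnorm0.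
  by case: S_empty; exists (`|v|^-1 *: v); exact: S_normalize.
have S_compact : compact S.
  apply: bounded_closed_compact; first by apply: (@norm_le_bounded_set _ _ _ 1) => v ->.
  exact: (continuous_closedP _).1 (@norm_continuous _ _) _ (@closed_eq _ 1).
have [c0 /[!inE] c0S c0_min] :=
  EVT_min_rV S0 S_compact (continuous_subspaceT isnorm_continuous).
have c0_neq0 : c0 != 0.
  by apply: contraPneq c0S => ->; rewrite /S /= normr0 => /eqP; rewrite eq_sym oner_eq0.
exists (N c0); first exact: isnorm_gt0.
move=> v; have [->|v0] := eqVneq v 0; first by rewrite normr0 mulr0 isnorm_ge0.
have := c0_min _ (mem_set (S_normalize v v0)).
by rewrite isnormZ normfV normr_id ler_pdivlMl ?normr_gt0 // mulrC.
Qed.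

Lemma isnorm_nearest_point (z : 'rV[R]_m) (A : set 'rV[R]_m) :
  A !=set0 -> closed A ->
  exists2 y0, A y0 & forall y, A y -> N (z - y0) <= N (z - y).
Proof.
move=> [a Aa] A_closed; have [c c_gt0 cN] := isnorm_ge_mx_norm.
have dist_cont : continuous (fun y : 'rV[R]_m => N (z - y)).
  move=> y; apply: continuous_comp; last exact: isnorm_continuous.
  by apply: continuousB; [exact: cst_continuous | exact: cvg_id].
pose K := A `&` [set y | N (z - y) <= N (z - a)].
have K_compact : compact K.
  apply: bounded_closed_compact.
    apply: (@norm_le_bounded_set _ _ _ (`|z| + N (z - a) / c)) => y [_ /= y_near].
    have := ler_normB z (z - y); rewrite subKr => /le_trans; apply.
    by rewrite lerD2l ler_pdivlMr // mulrC (le_trans (cN _)).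
  apply: closedI => //.
  exact: (continuous_closedP _).1 dist_cont _ (@closed_le _ (N (z - a))).
have K0 : K !=set0 by exists a; split => //=.
have [y0 /set_mem [Ay0 y0_near] y0_min] :=
  EVT_min_rV K0 K_compact (continuous_subspaceT dist_cont).
exists y0 => // y Ay; have [y_near|/ltW] := lerP (N (z - y)) (N (z - a)).
  by apply: y0_min; rewrite inE.
exact: le_trans y0_near.
Qed.

End IsNorm.

Section SequenceSpace.
Context {R : realType} {n : nat -> nat} {N : forall i, 'rV[R]_(n i) -> R}.
Hypothesis N_norm : forall i, is_norm (N i).

Lemma inX_seqsub {x y : forall i, 'rV[R]_(n i)} :
  inX N x -> inX N y -> inX N (seqsub x y).
Proof.
move=> [Mx xM] [My yM]; exists (Mx + My) => i.
exact: le_trans (ler_isnormB (N_norm i) _ _) (lerD (xM i) (yM i)).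
Qed.

Lemma le_supnorm u v : inX N v -> (forall i, N i (u i) <= N i (v i)) ->
  supnorm N u <= supnorm N v.
Proof.
move=> [M vM] uv; apply: ge_sup; first by exists (N 0%N (u 0%N)), 0%N.
move=> _ [i _ <-]; apply: le_trans (uv i) _; apply: ub_le_sup; last by exists i.
by exists M => _ [j _ <-].
Qed.

Lemma nearest_points x (A : forall i, set 'rV[R]_(n i)) :
  (forall i, A i !=set0) -> (forall i, closed (A i)) ->
  exists2 y, (forall i, A i (y i)) &
    forall i z, A i z -> N i (x i - y i) <= N i (x i - z).
Proof.
move=> A0 A_closed.
have nearest i := isnorm_nearest_point (N_norm i) (x i) (A i) (A0 i) (A_closed i).
by exists (fun i => s2val (cid2 (nearest i))) => i; case: cid2.
Qed.

End SequenceSpace.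

Theorem lemma2 (R : realType) (n : nat -> nat)
  (N : forall i, 'rV[R]_(n i) -> R) (A : forall i, set 'rV[R]_(n i)) :
  (forall i, is_norm (N i)) ->
  (forall i, A i !=set0) ->
  (forall i, closed (A i)) ->
  prodset N A !=set0 ->
  forall x : forall i, 'rV[R]_(n i), inX N x ->
  exists2 ystar, prodset N A ystar &
    dist_prod N A x = sup [set dist_comp (N i) (A i) (x i) | i in [set: nat]] /\
    sup [set dist_comp (N i) (A i) (x i) | i in [set: nat]] = supnorm N (seqsub x ystar).
Proof.
move=> N_norm A0 A_closed [a [aX aA]] x xX.
have [ys ysA ys_min] := nearest_points N_norm x A A0 A_closed.
have dist_compE i : dist_comp (N i) (A i) (x i) = N i (x i - ys i).
  exact: inf_image_argmin (ysA i) (ys_min i).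
have supE : sup [set dist_comp (N i) (A i) (x i) | i in [set: nat]] =
            supnorm N (seqsub x ys).
  by congr sup; apply: eq_imagel => i _; rewrite dist_compE.
have x_ysX : inX N (seqsub x ys).
  have [M xaM] := inX_seqsub N_norm xX aX.
  by exists M => i; apply: le_trans (ys_min i _ (aA i)) (xaM i).
have ysX : inX N ys.
  have [M x_x_ysM] := inX_seqsub N_norm xX x_ysX.
  by exists M => i; move: (x_x_ysM i); rewrite /seqsub subKr.
exists ys; first by split.
rewrite supE; split=> //.
apply: inf_image_argmin => [|y [yX yA]]; first by split.
by apply: le_supnorm (inX_seqsub N_norm xX yX) _ => i; exact: ys_min.
Qed.
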